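(* Assume [LJ1]–[LJ4], let $\ell>\gamma$, $u_0^{(1)},u_1^{(1)}>0$, let $k_n=(k_n^1,k_n^2)$ satisfy (K), and let $\mathcal T_n=\{t_n^0,\dots,t_n^{r_n}\}$ with $0=t_n^0<\dots<t_n^{r_n}=n$. Let $(u_n)$ satisfy $\sup_n\hat H_{1,n}^{\ell,k_n,\mathcal T_n}(u_n)<+\infty$. Let $(h_n)\subset\mathbb N$ be such that $k_n^1\le t_n^{h_n}<t_n^{h_n+1}\le k_n^2$ and $\liminf_{n\to\infty}(t_n^{h_n+1}-t_n^{h_n})=+\infty$. Then $$\lim_{n\to\infty}\frac{u_n^{t_n^{h_n}+1}-u_n^{t_n^{h_n}}}{\lambda_n}=\gamma.$$
   Context: Potentials: $J_1,J_2:\mathbb R\to(-\infty,+\infty]$; $J_{CB}:=J_1+J_2$; $J_0(z):=J_2(z)+\frac12\inf\{J_1(z_1)+J_1(z_2):z_1+z_2=2z\}$; $J_0^{**}$ is the convex lower semicontinuous envelope of $J_0$. Hypotheses: [LJ1] $\{z:J_0(z)=J_0^{**}(z)\}\cap\{z:J_0\text{ is affine in a neighbourhood of }z\}=\emptyset$. [LJ2] for every $z$ with $J_0(z)=J_0^{**}(z)$, the set $\{(z_1,z_2):z_1+z_2=2z,\ J_0(z)=J_2(z)+\frac12(J_1(z_1)+J_1(z_2))\}$ has exactly one element. [LJ3] $J_1,J_2$ are $C^{1,\alpha}$ on their domains for some $0<\alpha\le1$, $J_0$ is $C^1$ on its domain, $\operatorname{dom}J_1=\operatorname{dom}J_2\supset(0,+\infty)$,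 $\lim_{z\to+\infty}J_j(z)=0$ ($j=1,2$) and $\lim_{z\to+\infty}J_0(z)=:J_0(+\infty)\in\mathbb R$. [LJ4] there is a convex $\Psi:\mathbb R\to[0,+\infty]$ with $\lim_{z\to-\infty}\Psi(z)/|z|=+\infty$ and constants $c_1,c_2>0$ with $c_1(\Psi(z)-1)\le J_j(z)\le c_2\max\{\Psi(z),|z|\}$ for all $z\in\mathbb R$, $j=1,2$; there are $\delta_1,\delta_2,\gamma>0$ with $\{\delta_j\}=\operatorname{argmin}J_j$ and $\{\gamma\}=\operatorname{argmin}J_0$; $J_j$ is strictly convex on $(-\infty,\delta_j)\cap\operatorname{dom}J_j$; $J_0(\gamma)<J_0(+\infty)$; and $J_0(z)=J_0^{**}(z)$ for all $z\le\gamma$. Discrete setting: $\lambda_n=1/n$; $\mathcal A_n(0,1)$ is the set of continuous $u:[0,1]\to\mathbb R$ affine on each $(i\lambda_n,(i+1)\lambda_n)$, $i=0,\dots,n-1$; $u^i:=u(i\lambda_n)$. Boundary conditions (BC): $u^0=0$, $u^1=\lambda_nu_0^{(1)}$, $u^{n-1}=\ell-\lambda_nu_1^{(1)}$, $u^n=\ell$. Quasicontinuum energy: for integers $0<k_n^1<k_n^2<n-2$ and $u\in\mathcal A_n(0,1)$ satisfying (BC), $\hat H_n^{\ell,k_n}(u)=\sum_{i=0}^{n-1}\lambda_nJ_1(\frac{u^{i+1}-u^i}{\lambda_n})+\sum_{i=0}^{k_n^1-1}\lambda_nJ_2(\frac{u^{i+2}-u^i}{2\lambda_n})+\sum_{i=k_n^1}^{k_n^2-2}\frac{\lambda_n}{2}\{J_2(\frac{u^{i+1}-u^i}{\lambda_n})+J_2(\frac{u^{i+2}-u^{i+1}}{\lambda_n})\}+\sum_{i=k_n^2-1}^{n-2}\lambda_nJ_2(\frac{u^{i+2}-u^i}{2\lambda_n})$,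 and $+\infty$ otherwise. For $\mathcal T_n=\{t_n^0<\dots<t_n^{r_n}\}\subset\{0,\dots,n\}$ with $t_n^0=0,t_n^{r_n}=n$, $\mathcal A_{\mathcal T_n}(0,1)$ is the set of $u$ affine on each $(t_n^i\lambda_n,t_n^{i+1}\lambda_n)$, and $\hat H_n^{\ell,k_n,\mathcal T_n}(u)=\hat H_n^{\ell,k_n}(u)$ if $u\in\mathcal A_{\mathcal T_n}(0,1)$, $+\infty$ otherwise. Assumption (K): $k_n^1\to\infty$, $n-k_n^2\to\infty$, $\lambda_nk_n^1\to0$, $\lambda_n(n-k_n^2)\to0$. First order energy: $\hat H_{1,n}^{\ell,k_n,\mathcal T_n}(u):=\big(\hat H_n^{\ell,k_n,\mathcal T_n}(u)-J_0^{**}(\ell)\big)/\lambda_n$. *)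

From Stdlib Require Import Reals Lra Lia ClassicalEpsilon.
Open Scope R_scope.

Inductive ER : Type := Fin (x : R) | PInf | MInf.

Definition ER_le (x y : ER) : Prop :=
  match x, y with
  | MInf, _ => True
  | _, PInf => True
  | Fin a, Fin b => a <= b
  | _, _ => False
  end.

Definition ER_lt (x y : ER) : Prop := ER_le x y /\ x <> y.

(* Addition; +oo is absorbing (the case +oo + -oo never occurs below
   under the standing hypotheses). *)
Definition ER_plus (x y : ER) : ER :=
  match x, y with
  | PInf, _ | _, PInf => PInf
  | MInf, _ | _, MInf => MInf
  | Fin a, Fin b => Fin (a + b)
  end.

Definition ER_neg (x : ER) : ER :=
  match x with Fin a => Fin (- a) | PInf => MInf | MInf => PInf end.

(* Multiplication by a (positive) real scalar. *)
Definition ER_scale (c : R) (x : ER) : ER :=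
  match x with Fin a => Fin (c * a) | e => e end.

Definition ER_max (x y : ER) : ER :=
  match x, y with
  | PInf, _ | _, PInf => PInf
  | MInf, e | e, MInf => e
  | Fin a, Fin b => Fin (Rmax a b)
  end.

(* real part (used only where the value is known to be finite) *)
Definition fval (x : ER) : R := match x with Fin a => a | _ => 0 end.

Definition is_ER_glb (S : ER -> Prop) (m : ER) : Prop :=
  (forall x, S x -> ER_le m x) /\ (forall b, (forall x, S x -> ER_le b x) -> ER_le b m).
Definition is_ER_lub (S : ER -> Prop) (m : ER) : Prop :=
  (forall x, S x -> ER_le x m) /\ (forall b, (forall x, S x -> ER_le x b) -> ER_le m b).

Definition ER_inf (S : ER -> Prop) : ER :=
  match excluded_middle_informative (exists m, is_ER_glb S m) with
  | left H => proj1_sig (constructive_indefinite_description _ H)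
  | right _ => PInf
  end.
Definition ER_sup (S : ER -> Prop) : ER :=
  match excluded_middle_informative (exists m, is_ER_lub S m) with
  | left H => proj1_sig (constructive_indefinite_description _ H)
  | right _ => MInf
  end.

Definition dom (f : R -> ER) (z : R) : Prop := f z <> PInf.

Definition ER_convex (f : R -> ER) : Prop :=
  forall x y t, 0 < t < 1 ->
    ER_le (f (t * x + (1 - t) * y)) (ER_plus (ER_scale t (f x)) (ER_scale (1 - t) (f y))).

Definition ER_lsc (f : R -> ER) : Prop :=
  forall z a, ER_lt (Fin a) (f z) ->
    exists d, d > 0 /\ forall y, Rabs (y - z) < d -> ER_lt (Fin a) (f y).

(** Strict convexity on a set S (on which f is finite). *)
Definition strictly_convex_on (S : R -> Prop) (f : R -> ER) : Prop :=
  forall x y t, S x -> S y -> x <> y -> 0 < t < 1 ->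
    ER_lt (f (t * x + (1 - t) * y)) (Fin (t * fval (f x) + (1 - t) * fval (f y))).

Definition J0 (J1 J2 : R -> ER) (z : R) : ER :=
  ER_plus (J2 z)
    (ER_scale (1/2)
       (ER_inf (fun v => exists z1 z2, z1 + z2 = 2 * z /\ v = ER_plus (J1 z1) (J1 z2)))).

Definition conv_lsc_env (f : R -> ER) (z : R) : ER :=
  ER_sup (fun v => exists g : R -> ER,
             (forall w, g w <> MInf) /\ ER_convex g /\ ER_lsc g /\
             (forall w, ER_le (g w) (f w)) /\ v = g z).

Definition ER_lim_pinf (f : R -> ER) (L : R) : Prop :=
  forall eps, eps > 0 -> exists M, forall z, z > M ->
    exists v, f z = Fin v /\ Rabs (v - L) < eps.

Definition deriv_within (D : R -> Prop) (f : R -> R) (x l : R) : Prop :=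
  forall eps, eps > 0 -> exists d, d > 0 /\ forall y, D y -> y <> x -> Rabs (y - x) < d ->
    Rabs ((f y - f x) / (y - x) - l) < eps.

Definition C1_on (D : R -> Prop) (f : R -> ER) : Prop :=
  exists f' : R -> R,
    (forall x, D x -> deriv_within D (fun y => fval (f y)) x (f' x)) /\
    (forall x, D x -> forall eps, eps > 0 -> exists d, d > 0 /\
        forall y, D y -> Rabs (y - x) < d -> Rabs (f' y - f' x) < eps).

Definition C1alpha_on (D : R -> Prop) (f : R -> ER) (alpha : R) : Prop :=
  exists f' : R -> R,
    (forall x, D x -> deriv_within D (fun y => fval (f y)) x (f' x)) /\
    (forall a b, a <= b -> (forall x, a <= x <= b -> D x) ->
       exists C, forall x y, a <= x <= b -> a <= y <= b -> x <> y ->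
         Rabs (f' x - f' y) <= C * Rpower (Rabs (x - y)) alpha).

Definition lam (n : nat) : R := / INR n.

(* nodal value u^i = u(i * lambda_n) *)
Definition node (u : R -> R) (n i : nat) : R := u (INR i * lam n).

Definition affine_on (a b : R) (u : R -> R) : Prop :=
  exists p q, forall x, a < x < b -> u x = p * x + q.

Definition cont_on01 (u : R -> R) : Prop :=
  forall x, 0 <= x <= 1 -> forall eps, eps > 0 -> exists d, d > 0 /\
    forall y, 0 <= y <= 1 -> Rabs (y - x) < d -> Rabs (u y - u x) < eps.

Definition in_An (n : nat) (u : R -> R) : Prop :=
  cont_on01 u /\
  forall i, (i < n)%nat -> affine_on (INR i * lam n) (INR (i + 1)%nat * lam n) u.

Definition in_AT (n r : nat) (t : nat -> nat) (u : R -> R) : Prop :=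
  forall i, (i < r)%nat -> affine_on (INR (t i) * lam n) (INR (t (i + 1)%nat) * lam n) u.

Definition BC (n : nat) (l v0 v1 : R) (u : R -> R) : Prop :=
  node u n 0%nat = 0 /\ node u n 1%nat = lam n * v0 /\
  node u n (n - 1)%nat = l - lam n * v1 /\ node u n n = l.

Fixpoint ERsum (f : nat -> ER) (a k : nat) : ER :=
  match k with
  | O => Fin 0
  | S k' => ER_plus (f a) (ERsum f (S a) k')
  end.

Definition Hn (J1 J2 : R -> ER) (n : nat) (l v0 v1 : R) (k1 k2 : nat) (u : R -> R) : ER :=
  let L := lam n in
  let d1 := fun i => (node u n (i + 1)%nat - node u n i) / L in
  let d2 := fun i => (node u n (i + 2)%nat - node u n i) / (2 * L) in
  match excluded_middle_informative (in_An n u /\ BC n l v0 v1 u) with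
  | left _ =>
      ER_plus (ERsum (fun i => ER_scale L (J1 (d1 i))) 0 n)
     (ER_plus (ERsum (fun i => ER_scale L (J2 (d2 i))) 0 k1)
     (ER_plus (ERsum (fun i => ER_scale (L / 2) (ER_plus (J2 (d1 i)) (J2 (d1 (i + 1)%nat))))
                     k1 (k2 - 1 - k1)%nat)
              (ERsum (fun i => ER_scale L (J2 (d2 i))) (k2 - 1)%nat (n - k2)%nat)))
  | right _ => PInf
  end.

Definition HnT (J1 J2 : R -> ER) (n : nat) (l v0 v1 : R) (k1 k2 r : nat) (t : nat -> nat)
  (u : R -> R) : ER :=
  match excluded_middle_informative (in_AT n r t u) with
  | left _ => Hn J1 J2 n l v0 v1 k1 k2 u
  | right _ => PInf
  end.

Definition H1nT (J1 J2 : R -> ER) (n : nat) (l v0 v1 : R) (k1 k2 r : nat) (t : nat -> nat)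
  (u : R -> R) : ER :=
  ER_scale (/ lam n)
    (ER_plus (HnT J1 J2 n l v0 v1 k1 k2 r t u) (ER_neg (conv_lsc_env (J0 J1 J2) l))).

From Stdlib Require Import Reals Lra Lia Classical ClassicalEpsilon.
Open Scope R_scope.

(* Split every nearest-neighbour term of the energy into two halves and pair them with the
   next-nearest-neighbour term of the same bond or, in the quasicontinuum region, with the
   [J2] term of the same cell: each pair costs at least [min J0 = J0(gamma)], so
   [H_n >= lam_n ((n - 1) J0(gamma) + boundary terms + X_n)], where [X_n] is the excess
   [(t^(h_n+1) - t^(h_n) - 1) (J1 + J2 - J0(gamma))] evaluated at the constant slope of the
   element [h_n].  On the other side [J0**(l) <= J0(gamma)], because a convex minorant of [J0]
   that is bounded at [+oo] cannot rise to the right of [gamma].  Hence the bounded first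
   order energy bounds [X_n]; as the element length diverges, [J1 + J2 >= J0] must approach
   [J0(gamma)] at the slope, and since [gamma] is an isolated minimiser of [J0] (by the convex
   envelope on the left, by continuity and the limit at [+oo] on the right) the slope tends
   to [gamma]. *)

Lemma ER_le_trans x y z : ER_le x y -> ER_le y z -> ER_le x z.
Proof. destruct x, y, z; simpl; intros; try lra; tauto. Qed.

Lemma ER_le_Fin_inv a x : ER_le x (Fin a) -> x <> MInf -> exists b, x = Fin b /\ b <= a.
Proof. destruct x; simpl; intros; try tauto; eauto. Qed.

Lemma ER_not_le_Fin x a : ~ ER_le x (Fin a) -> ER_le (Fin a) x.
Proof. destruct x; simpl; intros; auto; try lra; tauto. Qed.

Lemma ER_plus_neq_MInf x y : x <> MInf -> y <> MInf -> ER_plus x y <> MInf.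
Proof. destruct x, y; simpl; congruence. Qed.

Lemma ER_scale_neq_MInf c x : x <> MInf -> ER_scale c x <> MInf.
Proof. destruct x; simpl; congruence. Qed.

Lemma ER_plus_Fin_inv x y v : x <> MInf -> y <> MInf -> ER_plus x y = Fin v ->
  exists a b, x = Fin a /\ y = Fin b /\ v = a + b.
Proof. destruct x, y; simpl; intros; try congruence. inversion H1; eauto. Qed.

Lemma ER_plus4_Fin_inv a b c d v :
  a <> MInf -> b <> MInf -> c <> MInf -> d <> MInf ->
  ER_plus a (ER_plus b (ER_plus c d)) = Fin v ->
  exists x y z w, a = Fin x /\ b = Fin y /\ c = Fin z /\ d = Fin w /\ v = x + (y + (z + w)).
Proof.
  intros Ha Hb Hc Hd H.
  destruct (ER_plus_Fin_inv _ _ _ Ha (ER_plus_neq_MInf _ _ Hb (ER_plus_neq_MInf _ _ Hc Hd)) H)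
    as [x [r1 [-> [H1 ->]]]].
  destruct (ER_plus_Fin_inv _ _ _ Hb (ER_plus_neq_MInf _ _ Hc Hd) H1) as [y [r2 [-> [H2 ->]]]].
  destruct (ER_plus_Fin_inv _ _ _ Hc Hd H2) as [z [w [-> [-> ->]]]].
  exists x, y, z, w. auto.
Qed.

Lemma ER_scale_Fin_inv c x v : ER_scale c x = Fin v -> exists a, x = Fin a /\ v = c * a.
Proof. destruct x; simpl; intros; try congruence. inversion H; eauto. Qed.

Lemma fval_scale c x : fval (ER_scale c x) = c * fval x.
Proof. destruct x; simpl; ring. Qed.

Lemma ER_plus_ge a b x y :
  ER_le (Fin a) x -> ER_le (Fin b) y -> ER_le (Fin (a + b)) (ER_plus x y).
Proof. destruct x, y; simpl; intros; try tauto; lra. Qed.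

Lemma ER_scaled_excess_le x e L M m : L > 0 -> x <> MInf -> ER_le e (Fin m) ->
  ER_le (ER_scale (/ L) (ER_plus x (ER_neg e))) (Fin M) ->
  exists E, x = Fin E /\ E <= m + M * L.
Proof.
  intros HL Hx He H.
  destruct x as [E| |]; [|simpl in H; tauto|congruence].
  destruct e as [e0| |]; simpl in H, He; try tauto.
  exists E. split; [reflexivity|].
  assert (E + - e0 <= M * L).
  { apply Rmult_le_reg_l with (/ L); [apply Rinv_0_lt_compat; lra|].
    replace (/ L * (M * L)) with M by (field; lra). lra. }
  lra.
Qed.

Lemma ER_inf_glb (S : ER -> Prop) b :
  (forall x, S x -> ER_le (Fin b) x) -> is_ER_glb S (ER_inf S).
Proof.
  intros Hb. unfold ER_inf.
  destruct (excluded_middle_informative _) as [H|Hno].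
  { exact (proj2_sig (constructive_indefinite_description _ H)). }
  exfalso; apply Hno.
  destruct (classic (exists r, S (Fin r))) as [[r0 Hr0]|Hempty].
  - (* [completeness] gives least upper bounds: reflect [S] through 0. *)
    set (E := fun y => S (Fin (- y))).
    assert (HE : bound E).
    { exists (- b). intros y Hy. specialize (Hb _ Hy). simpl in Hb. lra. }
    assert (HE0 : exists y, E y) by (exists (- r0); unfold E; rewrite Ropp_involutive; auto).
    destruct (completeness E HE HE0) as [s [Hub Hleast]].
    exists (Fin (- s)). split.
    + intros [x| |] Hx; simpl; auto.
      * assert (E (- x)) by (unfold E; rewrite Ropp_involutive; auto).
        specialize (Hub _ H). lra.
      * specialize (Hb _ Hx). simpl in Hb. tauto.
    + intros [c| |] Hc; simpl; auto.
      * assert (s <= - c) by (apply Hleast; intros y Hy; specialize (Hc _ Hy); simpl in Hc; lra).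
        lra.
      * specialize (Hc _ Hr0). simpl in Hc. tauto.
  - exists PInf. split.
    + intros [x| |] Hx; simpl; auto.
      * apply Hempty; eauto.
      * specialize (Hb _ Hx). simpl in Hb. tauto.
    + intros [c| |] _; simpl; auto.
Qed.

Lemma ER_sup_lub_or_MInf (S : ER -> Prop) : is_ER_lub S (ER_sup S) \/ ER_sup S = MInf.
Proof.
  unfold ER_sup. destruct (excluded_middle_informative _) as [H|H]; auto.
  left. exact (proj2_sig (constructive_indefinite_description _ H)).
Qed.

Fixpoint rsum (f : nat -> R) (a k : nat) : R :=
  match k with O => 0 | S k' => f a + rsum f (S a) k' end.

Lemma rsum_split f a j k : rsum f a (j + k) = rsum f a j + rsum f (a + j) k.
Proof.
  revert a. induction j; intros a; simpl.
  - rewrite Nat.add_0_r. lra.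
  - rewrite IHj. replace (S a + j)%nat with (a + S j)%nat by lia. lra.
Qed.

Lemma rsum_ext f g a k :
  (forall i, (a <= i < a + k)%nat -> f i = g i) -> rsum f a k = rsum g a k.
Proof.
  revert a. induction k; intros a H; simpl; auto.
  rewrite H by lia. rewrite IHk; auto. intros; apply H; lia.
Qed.

Lemma rsum_ge f a k m :
  (forall i, (a <= i < a + k)%nat -> m <= f i) -> INR k * m <= rsum f a k.
Proof.
  revert a. induction k; intros a H; cbn [rsum].
  - simpl; lra.
  - rewrite S_INR. assert (m <= f a) by (apply H; lia).
    assert (INR k * m <= rsum f (S a) k) by (apply IHk; intros; apply H; lia). lra.
Qed.

Lemma rsum_const c a k : rsum (fun _ => c) a k = INR k * c.
Proof. revert a; induction k; intros; cbn [rsum]; [simpl; lra|]. rewrite IHk, S_INR; lra. Qed.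

Lemma rsum_plus f g a k : rsum (fun i => f i + g i) a k = rsum f a k + rsum g a k.
Proof. revert a; induction k; intros; simpl; [lra|]. rewrite IHk; lra. Qed.

Lemma rsum_scal c f a k : rsum (fun i => c * f i) a k = c * rsum f a k.
Proof. revert a; induction k; intros; simpl; [lra|]. rewrite IHk; lra. Qed.

Lemma rsum_shift f a k : rsum (fun i => f (i + 1)%nat) a k = rsum f (a + 1) k.
Proof. revert a; induction k; intros; simpl; auto. rewrite IHk. f_equal. Qed.

Lemma rsum_midpoints f n : (1 <= n)%nat ->
  rsum (fun i => (f i + f (i + 1)%nat) / 2) 0 (n - 1)
  = rsum f 0 n - (f 0%nat + f (n - 1)%nat) / 2.
Proof.
  intros Hn. destruct n as [|n]; [lia|]. replace (S n - 1)%nat with n by lia.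
  assert (Hhalf : rsum (fun i => (f i + f (i + 1)%nat) / 2) 0 n
                  = / 2 * rsum f 0 n + / 2 * rsum f 1 n).
  { change (rsum f 1 n) with (rsum f (0 + 1) n).
    rewrite <- rsum_shift, <- !rsum_scal, <- rsum_plus. apply rsum_ext. intros; lra. }
  assert (Hfirst : rsum f 0 (S n) = f 0%nat + rsum f 1 n) by reflexivity.
  assert (Hlast : rsum f 0 (S n) = rsum f 0 n + f n).
  { replace (S n) with (n + 1)%nat by lia. rewrite rsum_split. simpl. lra. }
  lra.
Qed.

Lemma ERsum_neq_MInf f a k : (forall j, f j <> MInf) -> ERsum f a k <> MInf.
Proof.
  intros Hf. revert a; induction k; intros a; simpl; [congruence|].
  apply ER_plus_neq_MInf; auto.
Qed.

Lemma ERsum_Fin_inv f a k E : (forall j, f j <> MInf) -> ERsum f a k = Fin E ->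
  E = rsum (fun j => fval (f j)) a k /\
  forall j, (a <= j < a + k)%nat -> f j = Fin (fval (f j)).
Proof.
  intros Hf. revert a E. induction k; intros a E H; simpl in H |- *.
  - inversion H. split; [reflexivity|intros; lia].
  - destruct (ER_plus_Fin_inv _ _ _ (Hf a) (ERsum_neq_MInf _ _ _ Hf) H) as [x [y [Ex [Ey ->]]]].
    destruct (IHk _ _ Ey) as [-> Hrest]. rewrite Ex. split; [reflexivity|].
    intros j Hj. destruct (Nat.eq_dec j a) as [->|]; [rewrite Ex; reflexivity|].
    apply Hrest; lia.
Qed.


Lemma ER_sup_gt (S : ER -> Prop) a :
  ~ ER_le (ER_sup S) (Fin a) -> exists x, S x /\ ~ ER_le x (Fin a).
Proof.
  intros Hgt. destruct (ER_sup_lub_or_MInf S) as [[_ Hleast]|HM].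
  - apply NNPP. intros Hno. apply Hgt, Hleast. intros x Hx.
    apply NNPP. intros Hx'. apply Hno. eauto.
  - rewrite HM in Hgt. simpl in Hgt. tauto.
Qed.

Lemma Rle_0_of_mult_bounded x C z0 : (forall z, z > z0 -> x * z <= C) -> x <= 0.
Proof.
  intros H. apply Rnot_lt_le. intros Hx.
  set (z := Rmax z0 0 + Rabs C / x + 1).
  assert (Hz0 : Rabs C / x >= 0)
    by (apply Rle_ge, Rmult_le_pos; [apply Rabs_pos|left; apply Rinv_0_lt_compat; lra]).
  pose proof (Rmax_l z0 0). pose proof (Rmax_r z0 0). pose proof (Rle_abs C).
  specialize (H z ltac:(unfold z; lra)).
  assert (x * z = x * Rmax z0 0 + Rabs C + x) by (unfold z; field; lra).
  nra.
Qed.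

Lemma ER_convex_chord g x y z gx gz : ER_convex g -> (forall w, g w <> MInf) ->
  x < y < z -> g x = Fin gx -> g z = Fin gz ->
  exists gy, g y = Fin gy /\ gy * (z - x) <= gx * (z - y) + gz * (y - x).
Proof.
  intros Hc Hnm Hxyz Egx Egz.
  set (s := (z - y) / (z - x)).
  assert (Hs : 0 < s < 1).
  { unfold s. split; [apply Rdiv_lt_0_compat; lra|].
    apply (Rmult_lt_reg_r (z - x)); [lra|]. field_simplify; lra. }
  pose proof (Hc x z s Hs) as H.
  replace (s * x + (1 - s) * z) with y in H by (unfold s; field; lra).
  rewrite Egx, Egz in H. simpl in H.
  destruct (ER_le_Fin_inv _ _ H (Hnm y)) as [gy [Egy Hgy]].
  exists gy. split; auto.
  replace (gx * (z - y) + gz * (y - x)) with ((s * gx + (1 - s) * gz) * (z - x))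
    by (unfold s; field; lra).
  apply Rmult_le_compat_r; lra.
Qed.

(* Chords from [a] to points [z] far to the right: their slopes stay bounded by
   [(B - ga) / (z - a)], which tends to 0. *)
Lemma ER_convex_bounded_le g a ga l B R0 : ER_convex g -> (forall w, g w <> MInf) ->
  g a = Fin ga -> a < l -> (forall z, z > R0 -> ER_le (g z) (Fin B)) ->
  ER_le (g l) (Fin ga).
Proof.
  intros Hc Hnm Ega Hal HB.
  assert (Hchord : forall z, z > Rmax R0 l ->
            exists c, g l = Fin c /\ (c - ga) * (z - a) <= Rabs (B - ga) * (l - a)).
  { intros z Hz. pose proof (Rmax_l R0 l). pose proof (Rmax_r R0 l).
    destruct (ER_le_Fin_inv _ _ (HB z ltac:(lra)) (Hnm z)) as [gz [Egz Hgz]].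
    destruct (ER_convex_chord g a l z ga gz Hc Hnm ltac:(lra) Ega Egz) as [c [Ec Hcz]].
    exists c. split; auto.
    assert ((gz - ga) * (l - a) <= Rabs (B - ga) * (l - a)).
    { apply Rmult_le_compat_r; [lra|]. pose proof (Rle_abs (B - ga)). lra. }
    nra. }
  destruct (Hchord (Rmax R0 l + 1)) as [c [Ec _]]; [lra|].
  rewrite Ec. simpl.
  enough (c - ga <= 0) by lra.
  apply (Rle_0_of_mult_bounded _ (Rabs (B - ga) * (l - a)) (Rmax R0 l - a)).
  intros w Hw. destruct (Hchord (w + a)) as [c' [Ec' Hc']]; [lra|].
  rewrite Ec in Ec'. injection Ec' as <-.
  replace w with (w + a - a) by ring. exact Hc'.
Qed.

Section IsolatedMinimum.

Variable f : R -> ER.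
Variables gam m : R.
Hypothesis f_gam : f gam = Fin m.
Hypothesis f_ge : forall z, ER_le (Fin m) (f z).
Hypothesis argmin_unique : forall z, (forall w, ER_le (f z) (f w)) -> z = gam.

Lemma ER_argmin_gt w : w <> gam -> exists a, a > m /\ ~ ER_le (f w) (Fin a).
Proof.
  intros Hw. pose proof (f_ge w) as Hge.
  destruct (f w) as [x| |] eqn:Ew; simpl in Hge; try tauto.
  - destruct (Req_dec x m) as [->|Hxm].
    + exfalso. apply Hw, argmin_unique. intros w'. rewrite Ew. apply f_ge.
    + exists ((m + x) / 2). simpl. split; lra.
  - exists (m + 1). simpl. split; [lra|tauto].
Qed.

(* Left of [gam] the function coincides with its convex envelope, and a convex minorant
   exceeding [m] at [gam - eps] keeps exceeding it further left. *)
Lemma ER_env_gap_left :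
  (forall z, f z <> MInf) -> (forall z, z <= gam -> f z = conv_lsc_env f z) ->
  forall eps, eps > 0 -> exists eta, eta > 0 /\
    forall z, z <= gam - eps -> ER_le (Fin (m + eta)) (f z).
Proof.
  intros Hnm Henv eps Heps. set (w := gam - eps).
  destruct (ER_argmin_gt w ltac:(unfold w; lra)) as [a [Ham Hwa]].
  exists (a - m). split; [lra|]. replace (m + (a - m)) with a by ring.
  rewrite (Henv w ltac:(unfold w; lra)) in Hwa.
  destruct (ER_sup_gt _ _ Hwa) as [x [[g [Hgnm [Hgc [_ [Hgle ->]]]]] Hgw]].
  assert (Hgg : ER_le (g gam) (Fin m)) by (rewrite <- f_gam; auto).
  destruct (ER_le_Fin_inv _ _ Hgg (Hgnm gam)) as [gm [Egm Hgm]].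
  intros z Hz. apply ER_le_trans with (g z); [|auto].
  destruct (Rle_lt_or_eq_dec z w Hz) as [Hzw| ->]; [|apply ER_not_le_Fin; auto].
  destruct (g z) as [gz| |] eqn:Egz; [|simpl; auto|congruence].
  destruct (ER_convex_chord g z w gam gz gm Hgc Hgnm ltac:(unfold w in *; lra) Egz Egm)
    as [gw [Egw Hchord]].
  rewrite Egw in Hgw. simpl in Hgw |- *. unfold w in *.
  assert (a * (gam - z) < gw * (gam - z)) by (apply Rmult_lt_compat_r; lra).
  assert (gm * (gam - eps - z) <= a * (gam - eps - z)) by (apply Rmult_le_compat_r; lra).
  assert (a * (gam - z) = a * (gam - (gam - eps)) + a * (gam - eps - z)) by ring.
  apply Rmult_le_reg_r with (gam - (gam - eps)); lra.
Qed.

Lemma deriv_within_continuity_pt (D : R -> Prop) (g : R -> R) x l :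
  (exists r, r > 0 /\ forall y, Rabs (y - x) < r -> D y) ->
  deriv_within D g x l -> continuity_pt g x.
Proof.
  intros [r [Hr HD]] Hd eps Heps.
  destruct (Hd 1 ltac:(lra)) as [d [Hd0 Hd1]].
  set (K := Rabs l + 1).
  assert (HK : K > 0) by (unfold K; pose proof (Rabs_pos l); lra).
  exists (Rmin (Rmin r d) (eps / K)). split.
  { apply Rmin_pos; [apply Rmin_pos; lra|]. apply Rdiv_lt_0_compat; lra. }
  intros y [[_ Hyx] Hy]. simpl in *. unfold R_dist in *.
  pose proof (Rmin_l (Rmin r d) (eps / K)). pose proof (Rmin_r (Rmin r d) (eps / K)).
  pose proof (Rmin_l r d). pose proof (Rmin_r r d).
  assert (Hyx0 : y - x <> 0) by lra.
  specialize (Hd1 y ltac:(apply HD; lra) (not_eq_sym Hyx) ltac:(lra)).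
  replace (g y - g x) with (((g y - g x) / (y - x) - l) * (y - x) + l * (y - x))
    by (field; auto).
  eapply Rle_lt_trans; [apply Rabs_triang|]. rewrite !Rabs_mult.
  assert (Rabs (y - x) * K < eps).
  { apply (Rmult_lt_reg_r (/ K)); [apply Rinv_0_lt_compat; lra|].
    rewrite Rmult_assoc, Rinv_r; [unfold Rdiv in *; lra|lra]. }
  pose proof (Rabs_pos (y - x)).
  assert (Rabs ((g y - g x) / (y - x) - l) * Rabs (y - x) <= Rabs (y - x))
    by (rewrite <- (Rmult_1_l (Rabs (y - x))) at 2; apply Rmult_le_compat_r; lra).
  unfold K in *. nra.
Qed.

(* Right of [gam]: [f] is continuous, so it has a minimum on [gam + eps, R0] that exceeds [m];
   beyond [R0] it is close to its limit [L > m]. *)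
Lemma ER_C1_gap_right L :
  (forall z, z > gam -> f z = Fin (fval (f z))) -> m < L -> ER_lim_pinf f L ->
  C1_on (dom f) f ->
  forall eps, eps > 0 -> exists eta, eta > 0 /\
    forall z, z >= gam + eps -> ER_le (Fin (m + eta)) (f z).
Proof.
  intros Hfin HmL Hlim [f' [Hf' _]] eps Heps.
  destruct (Hlim ((L - m) / 2) ltac:(lra)) as [R0 HR0].
  set (A := gam + eps). set (B := Rmax A R0).
  assert (Hcont : forall c, A <= c <= B -> continuity_pt (fun z => fval (f z)) c).
  { intros c Hc. apply deriv_within_continuity_pt with (dom f) (f' c).
    - exists (c - gam). split; [unfold A in Hc; lra|]. intros y Hy.
      apply Rabs_def2 in Hy. unfold dom. rewrite Hfin by lra. congruence.
    - apply Hf'. unfold dom. rewrite Hfin by (unfold A in Hc; lra). congruence. }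
  destruct (continuity_ab_min _ A B (Rmax_l A R0) Hcont) as [xs [Hmin Hxs]].
  destruct (ER_argmin_gt xs ltac:(unfold A in Hxs; lra)) as [a [Ham Hxa]].
  rewrite Hfin in Hxa by (unfold A in Hxs; lra). simpl in Hxa.
  exists (Rmin ((L - m) / 2) (a - m)). split; [apply Rmin_pos; lra|].
  intros z Hz. pose proof (Rmin_l ((L - m) / 2) (a - m)).
  pose proof (Rmin_r ((L - m) / 2) (a - m)).
  destruct (Rle_dec z B).
  - rewrite (Hfin z) by (unfold A in Hz; lra). simpl.
    assert (fval (f xs) <= fval (f z)) by (apply Hmin; lra). lra.
  - destruct (HR0 z) as [v [Ev Hv]]; [unfold B in *; pose proof (Rmax_r A R0); lra|].
    rewrite Ev. simpl. apply Rabs_def2 in Hv. lra.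
Qed.

Lemma ER_isolated_argmin L :
  (forall z, f z <> MInf) -> (forall z, z <= gam -> f z = conv_lsc_env f z) ->
  (forall z, z > gam -> f z = Fin (fval (f z))) -> m < L -> ER_lim_pinf f L ->
  C1_on (dom f) f ->
  forall eps, eps > 0 -> exists eta, eta > 0 /\
    forall z, Rabs (z - gam) >= eps -> ER_le (Fin (m + eta)) (f z).
Proof.
  intros Hnm Henv Hfin HmL Hlim HC1 eps Heps.
  destruct (ER_env_gap_left Hnm Henv eps Heps) as [e1 [He1 Hleft]].
  destruct (ER_C1_gap_right L Hfin HmL Hlim HC1 eps Heps) as [e2 [He2 Hright]].
  exists (Rmin e1 e2). split; [apply Rmin_pos; lra|].
  intros z Hz. pose proof (Rmin_l e1 e2). pose proof (Rmin_r e1 e2).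
  destruct (Rle_dec z (gam - eps)) as [Hl|Hr].
  - apply ER_le_trans with (Fin (m + e1)); [simpl; lra|auto].
  - apply ER_le_trans with (Fin (m + e2)); [simpl; lra|].
    apply Hright. destruct (Rcase_abs (z - gam)).
    + rewrite Rabs_left in Hz; lra.
    + rewrite Rabs_right in Hz; lra.
Qed.

End IsolatedMinimum.

Lemma conv_lsc_env_le_right (f : R -> ER) a fa l L :
  f a = Fin fa -> a < l -> ER_lim_pinf f L -> ER_le (conv_lsc_env f l) (Fin fa).
Proof.
  intros Efa Hal Hlim. unfold conv_lsc_env.
  match goal with
  | |- ER_le (ER_sup ?S) _ => destruct (ER_sup_lub_or_MInf S) as [[_ Hleast]| ->]; [|simpl; auto]
  end.
  apply Hleast. intros x [g [Hgnm [Hgc [_ [Hgf ->]]]]].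
  destruct (Hlim 1 ltac:(lra)) as [R0 HR0].
  assert (Hga : ER_le (g a) (Fin fa)) by (rewrite <- Efa; apply Hgf).
  destruct (ER_le_Fin_inv _ _ Hga (Hgnm a)) as [ga [Ega Hga']].
  apply ER_le_trans with (Fin ga); [|simpl; exact Hga'].
  apply (ER_convex_bounded_le g a ga l (L + 1) R0 Hgc Hgnm Ega Hal).
  intros z Hz. destruct (HR0 z Hz) as [v [Ev Hv]].
  apply ER_le_trans with (f z); [auto|]. rewrite Ev. simpl.
  apply Rabs_def2 in Hv. lra.
Qed.

Definition slope (u : R -> R) (n i : nat) : R := (node u n (i + 1) - node u n i) / lam n.

Lemma lam_pos n : (0 < n)%nat -> lam n > 0.
Proof. intros Hn. apply Rinv_0_lt_compat, lt_0_INR. exact Hn. Qed.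

Lemma lam_mul_n n : (0 < n)%nat -> lam n * INR n = 1.
Proof. intros Hn. apply Rinv_l, not_0_INR. lia. Qed.

Lemma second_difference_slope u n i : (0 < n)%nat ->
  (node u n (i + 2) - node u n i) / (2 * lam n) = (slope u n i + slope u n (i + 1)) / 2.
Proof.
  intros Hn. pose proof (lam_pos n Hn). unfold slope.
  replace (i + 1 + 1)%nat with (i + 2)%nat by lia. field. lra.
Qed.

Lemma BC_slopes n l v0 v1 u : (0 < n)%nat -> BC n l v0 v1 u ->
  slope u n 0 = v0 /\ slope u n (n - 1) = v1.
Proof.
  intros Hn [B0 [B1 [B2 B3]]]. pose proof (lam_pos n Hn). unfold slope.
  replace (n - 1 + 1)%nat with n by lia. simpl (0 + 1)%nat.
  rewrite B0, B1, B2, B3. split; field; lra.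
Qed.

Lemma affine_at_endpoints (u : R -> R) a b p q x :
  0 <= a -> a < b -> b <= 1 -> cont_on01 u ->
  (forall y, a < y < b -> u y = p * y + q) -> (x = a \/ x = b) -> u x = p * x + q.
Proof.
  intros Ha Hab Hb Hc Haff Hx. apply NNPP. intros Hne.
  set (e := Rabs (u x - (p * x + q)) / 2).
  assert (He : e > 0) by (apply Rdiv_lt_0_compat; [apply Rabs_pos_lt; lra|lra]).
  destruct (Hc x ltac:(destruct Hx; subst; lra) e He) as [d [Hd Hnear]].
  set (s := Rmin (Rmin d (b - a)) (e / (Rabs p + 1)) / 2).
  pose proof (Rabs_pos p).
  pose proof (Rmin_l (Rmin d (b - a)) (e / (Rabs p + 1))).
  pose proof (Rmin_r (Rmin d (b - a)) (e / (Rabs p + 1))).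
  pose proof (Rmin_l d (b - a)). pose proof (Rmin_r d (b - a)).
  assert (Hs : 0 < s).
  { unfold s. apply Rdiv_lt_0_compat; [|lra]. apply Rmin_pos; [apply Rmin_pos; lra|].
    apply Rdiv_lt_0_compat; lra. }
  assert (Hsp : s * (Rabs p + 1) < e).
  { assert (s < e / (Rabs p + 1)) by (unfold s in *; lra).
    apply (Rmult_lt_compat_r (Rabs p + 1)) in H4; [|lra].
    replace (e / (Rabs p + 1) * (Rabs p + 1)) with e in H4 by (field; lra). lra. }
  assert (Hy : exists y, a < y < b /\ Rabs (y - x) = s).
  { destruct Hx as [-> | ->].
    - exists (a + s). split; [unfold s in *; lra|].
      replace (a + s - a) with s by ring. apply Rabs_right; lra.
    - exists (b - s). split; [unfold s in *; lra|].
      replace (b - s - b) with (- s) by ring. rewrite Rabs_Ropp. apply Rabs_right; lra. }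
  destruct Hy as [y [Hy Hys]].
  specialize (Hnear y ltac:(lra) ltac:(unfold s in *; lra)). rewrite Haff in Hnear by auto.
  assert (Rabs (u x - (p * x + q)) <= Rabs (p * y + q - u x) + Rabs p * Rabs (y - x)).
  { rewrite <- Rabs_mult, <- (Rabs_Ropp (p * y + q - u x)).
    replace (u x - (p * x + q)) with (- (p * y + q - u x) + p * (y - x)) by ring.
    apply Rabs_triang. }
  unfold e in *. nra.
Qed.

Lemma slope_const_on_element n r t u hh :
  (0 < n)%nat -> cont_on01 u -> in_AT n r t u -> (hh < r)%nat ->
  (t hh < t (hh + 1))%nat -> (t (hh + 1) <= n)%nat ->
  forall j, (t hh <= j < t (hh + 1))%nat -> slope u n j = slope u n (t hh).
Proof.
  intros Hn Hc HAT Hhr Hlt Hle.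
  set (th := t hh) in *. set (th' := t (hh + 1)%nat) in *.
  destruct (HAT hh Hhr) as [p [q Haff]]. fold th th' in Haff.
  pose proof (lam_pos n Hn) as HL. pose proof (lam_mul_n n Hn) as HLn.
  assert (Hnode : forall j, (th <= j <= th')%nat -> node u n j = p * (INR j * lam n) + q).
  { assert (H0 : 0 <= INR th * lam n) by (apply Rmult_le_pos; [apply pos_INR|lra]).
    assert (H01 : INR th * lam n < INR th' * lam n)
      by (apply Rmult_lt_compat_r; [lra|apply lt_INR; lia]).
    assert (H1 : INR th' * lam n <= 1).
    { rewrite <- HLn, Rmult_comm. apply Rmult_le_compat_l; [lra|apply le_INR; lia]. }
    intros j Hj. unfold node.
    destruct (Nat.eq_dec j th) as [->|];
      [apply (affine_at_endpoints u (INR th * lam n) (INR th' * lam n)); auto|].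
    destruct (Nat.eq_dec j th') as [->|];
      [apply (affine_at_endpoints u (INR th * lam n) (INR th' * lam n)); auto|].
    apply Haff. split; apply Rmult_lt_compat_r; try lra; apply lt_INR; lia. }
  assert (Hslope : forall j, (th <= j < th')%nat -> slope u n j = p).
  { intros j Hj. unfold slope. rewrite !Hnode by lia. rewrite plus_INR, INR_1. field. lra. }
  intros j Hj. rewrite !Hslope by lia. reflexivity.
Qed.

(* The pairing behind the lower bound: each nearest-neighbour term is split in two halves,
   which are matched with the next-nearest-neighbour term of the same bond (outside the
   quasicontinuum region) or with the [J2] term of the same cell (inside it). *)
Lemma qc_sum_ge (f1 f2 g : nat -> R) m n k1 k2 th th' :
  (k1 <= th)%nat -> (th < th')%nat -> (th' <= k2)%nat -> (k2 < n)%nat ->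
  (forall i, (i < k1 \/ k2 - 1 <= i < n - 1)%nat -> m <= (f1 i + f1 (i + 1)%nat) / 2 + g i) ->
  (forall i, (k1 <= i < k2)%nat -> m <= f1 i + f2 i) ->
  (forall i, (th <= i < th')%nat -> f1 i = f1 th /\ f2 i = f2 th) ->
  (f1 0%nat + f1 (n - 1)%nat) / 2 + (INR n - 1) * m + (INR (th' - th) - 1) * (f1 th + f2 th - m)
  <= rsum f1 0 n + rsum g 0 k1 + rsum (fun i => (f2 i + f2 (i + 1)%nat) / 2) k1 (k2 - 1 - k1)
     + rsum g (k2 - 1) (n - k2).
Proof.
  intros Hk1 Hth Hk2 Hn Hout Hin Hconst.
  set (Q := fun i => (f1 i + f1 (i + 1)%nat) / 2).
  set (P := fun i => Q i + (f2 i + f2 (i + 1)%nat) / 2).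
  assert (HQ : rsum f1 0 n = (f1 0%nat + f1 (n - 1)%nat) / 2
                 + rsum Q 0 k1 + rsum Q k1 (k2 - 1 - k1) + rsum Q (k2 - 1) (n - k2)).
  { pose proof (rsum_midpoints f1 n ltac:(lia)) as Hmid. fold Q in Hmid.
    assert (Hsplit : rsum Q 0 (n - 1)
                     = rsum Q 0 k1 + rsum Q k1 (k2 - 1 - k1) + rsum Q (k2 - 1) (n - k2)).
    { replace (n - 1)%nat with (k1 + (k2 - 1 - k1) + (n - k2))%nat by lia.
      rewrite !rsum_split. replace (0 + (k1 + (k2 - 1 - k1)))%nat with (k2 - 1)%nat by lia.
      reflexivity. }
    lra. }
  assert (HP : rsum P k1 (k2 - 1 - k1)
               = rsum P k1 (th - k1) + rsum P th (th' - th - 1) + rsum P (th' - 1) (k2 - th')).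
  { replace (k2 - 1 - k1)%nat with (th - k1 + (th' - th - 1) + (k2 - th'))%nat by lia.
    rewrite !rsum_split.
    replace (k1 + (th - k1 + (th' - th - 1)))%nat with (th' - 1)%nat by lia.
    replace (k1 + (th - k1))%nat with th by lia. ring. }
  assert (Hcell : forall i, (k1 <= i < k2 - 1)%nat -> m <= P i).
  { intros i Hi. pose proof (Hin i ltac:(lia)). pose proof (Hin (i + 1)%nat ltac:(lia)).
    unfold P, Q. lra. }
  assert (B1 : INR k1 * m <= rsum Q 0 k1 + rsum g 0 k1)
    by (rewrite <- rsum_plus; apply rsum_ge; intros; apply Hout; lia).
  assert (B2 : INR (n - k2) * m <= rsum Q (k2 - 1) (n - k2) + rsum g (k2 - 1) (n - k2))
    by (rewrite <- rsum_plus; apply rsum_ge; intros; apply Hout; lia).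
  assert (B3 : INR (th - k1) * m <= rsum P k1 (th - k1))
    by (apply rsum_ge; intros; apply Hcell; lia).
  assert (B4 : INR (k2 - th') * m <= rsum P (th' - 1) (k2 - th'))
    by (apply rsum_ge; intros; apply Hcell; lia).
  assert (B5 : rsum P th (th' - th - 1) = INR (th' - th - 1) * (f1 th + f2 th)).
  { rewrite <- (rsum_const _ th). apply rsum_ext. intros i Hi.
    unfold P, Q. destruct (Hconst i ltac:(lia)) as [-> ->].
    destruct (Hconst (i + 1)%nat ltac:(lia)) as [-> ->]. lra. }
  assert (HPQ : rsum (fun i => (f2 i + f2 (i + 1)%nat) / 2) k1 (k2 - 1 - k1)
                = rsum P k1 (k2 - 1 - k1) - rsum Q k1 (k2 - 1 - k1)).
  { unfold P. rewrite rsum_plus. ring. }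
  assert (Hcount : INR n - 1 = INR k1 + INR (th - k1) + INR (th' - th - 1) + INR (k2 - th')
                               + INR (n - k2)).
  { rewrite <- !plus_INR, <- INR_1, <- minus_INR by lia. f_equal. lia. }
  assert (Hlen : INR (th' - th) - 1 = INR (th' - th - 1)).
  { rewrite <- INR_1, <- minus_INR by lia. reflexivity. }
  rewrite HQ, HPQ, HP, B5, Hlen. nra.
Qed.

Section Potentials.

Variables J1 J2 : R -> ER.
Variable j1min : R.
Hypothesis J1_ge : forall z, ER_le (Fin j1min) (J1 z).
Hypothesis J2_neq_MInf : forall z, J2 z <> MInf.

Lemma J1_neq_MInf z : J1 z <> MInf.
Proof. intros E. pose proof (J1_ge z) as H. rewrite E in H. exact H. Qed.

Definition pair_sums (a : R) : ER -> Prop :=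
  fun v => exists z1 z2, z1 + z2 = 2 * a /\ v = ER_plus (J1 z1) (J1 z2).

Lemma J0_pair_sums a :
  J0 J1 J2 a = ER_plus (J2 a) (ER_scale (1/2) (ER_inf (pair_sums a))).
Proof. reflexivity. Qed.

Lemma pair_sums_glb a :
  is_ER_glb (pair_sums a) (ER_inf (pair_sums a)) /\
  ER_le (Fin (j1min + j1min)) (ER_inf (pair_sums a)).
Proof.
  assert (Hb : forall v, pair_sums a v -> ER_le (Fin (j1min + j1min)) v)
    by (intros v [z1 [z2 [_ ->]]]; apply ER_plus_ge; auto).
  pose proof (ER_inf_glb _ _ Hb) as Hglb. split; [exact Hglb|]. apply (proj2 Hglb), Hb.
Qed.

Lemma J0_le_split a x y p q1 q2 :
  x + y = 2 * a -> J2 a = Fin p -> J1 x = Fin q1 -> J1 y = Fin q2 ->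
  ER_le (J0 J1 J2 a) (Fin (p + (q1 + q2) / 2)).
Proof.
  intros Hxy Hp Hq1 Hq2. rewrite J0_pair_sums, Hp.
  destruct (pair_sums_glb a) as [[Hlow _] Hge].
  assert (Hxy_mem : ER_le (ER_inf (pair_sums a)) (Fin (q1 + q2))).
  { apply Hlow. exists x, y. split; [exact Hxy|]. rewrite Hq1, Hq2. reflexivity. }
  destruct (ER_inf (pair_sums a)); simpl in *; try tauto. lra.
Qed.

Lemma J0_neq_MInf a : J0 J1 J2 a <> MInf.
Proof.
  rewrite J0_pair_sums. destruct (pair_sums_glb a) as [_ Hge].
  apply ER_plus_neq_MInf; [auto|]. apply ER_scale_neq_MInf.
  destruct (ER_inf (pair_sums a)); simpl in *; congruence.
Qed.

Lemma J0_Fin a : J1 a <> PInf -> J2 a <> PInf -> J0 J1 J2 a = Fin (fval (J0 J1 J2 a)).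
Proof.
  intros H1 H2.
  destruct (J1 a) as [q| |] eqn:E1; [|congruence|destruct (J1_neq_MInf a); auto].
  destruct (J2 a) as [p| |] eqn:E2; [|congruence|destruct (J2_neq_MInf a); auto].
  pose proof (J0_le_split a a a p q q ltac:(lra) E2 E1 E1) as Hle.
  pose proof (J0_neq_MInf a) as Hnm.
  destruct (J0 J1 J2 a); simpl in *; tauto.
Qed.

Lemma ERsum_scale_neq_MInf c f a k :
  (forall j, f j <> MInf) -> ERsum (fun j => ER_scale c (f j)) a k <> MInf.
Proof. intros Hf. apply ERsum_neq_MInf. intros j. apply ER_scale_neq_MInf, Hf. Qed.

Lemma ERsum_scale_Fin_inv c f a k E : (forall j, f j <> MInf) ->
  ERsum (fun j => ER_scale c (f j)) a k = Fin E ->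
  E = c * rsum (fun j => fval (f j)) a k /\
  forall j, (a <= j < a + k)%nat -> f j = Fin (fval (f j)).
Proof.
  intros Hf HE.
  destruct (ERsum_Fin_inv _ _ _ _ (fun j => ER_scale_neq_MInf c _ (Hf j)) HE) as [-> Hterm].
  split.
  - rewrite <- rsum_scal. apply rsum_ext. intros; apply fval_scale.
  - intros j Hj. destruct (ER_scale_Fin_inv _ _ _ (Hterm j Hj)) as [x [-> _]]. reflexivity.
Qed.

Lemma Hn_Fin_inv n l v0 v1 k1 k2 u E :
  (k1 + 1 < k2)%nat -> (k2 < n)%nat ->
  Hn J1 J2 n l v0 v1 k1 k2 u = Fin E ->
  let f1 i := fval (J1 (slope u n i)) in
  let f2 i := fval (J2 (slope u n i)) in
  let g i := fval (J2 ((node u n (i + 2) - node u n i) / (2 * lam n))) in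
  in_An n u /\ BC n l v0 v1 u /\
  (forall i, (i < n)%nat -> J1 (slope u n i) = Fin (f1 i)) /\
  (forall i, (k1 <= i < k2)%nat -> J2 (slope u n i) = Fin (f2 i)) /\
  (forall i, (i < k1 \/ k2 - 1 <= i < n - 1)%nat ->
     J2 ((node u n (i + 2) - node u n i) / (2 * lam n)) = Fin (g i)) /\
  E = lam n * (rsum f1 0 n + rsum g 0 k1
               + rsum (fun i => (f2 i + f2 (i + 1)%nat) / 2) k1 (k2 - 1 - k1)
               + rsum g (k2 - 1) (n - k2)).
Proof.
  intros Hk Hkn HE f1 f2 g. unfold Hn in HE.
  destruct (excluded_middle_informative _) as [[HAn HBC]|]; [|discriminate]. cbv zeta in HE.
  assert (HJ1 := J1_neq_MInf).
  pose proof (fun H1 H2 H3 H4 => ER_plus4_Fin_inv _ _ _ _ _ H1 H2 H3 H4 HE) as Hsplit.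
  edestruct Hsplit as (E1 & E2 & E3 & E4 & HE1 & HE2 & HE3 & HE4 & ->);
    [apply ERsum_scale_neq_MInf; intros; try apply ER_plus_neq_MInf; auto..|].
  destruct (ERsum_scale_Fin_inv _ _ _ _ _ (fun j => HJ1 _) HE1) as [-> T1].
  destruct (ERsum_scale_Fin_inv _ _ _ _ _ (fun j => J2_neq_MInf _) HE2) as [-> T2].
  destruct (ERsum_scale_Fin_inv _ _ _ _ _
              (fun j => ER_plus_neq_MInf _ _ (J2_neq_MInf _) (J2_neq_MInf _)) HE3) as [-> T3].
  destruct (ERsum_scale_Fin_inv _ _ _ _ _ (fun j => J2_neq_MInf _) HE4) as [-> T4].
  assert (Hpair : forall i, (k1 <= i < k2 - 1)%nat ->
            J2 (slope u n i) = Fin (f2 i) /\ J2 (slope u n (i + 1)) = Fin (f2 (i + 1)%nat)).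
  { intros i Hi.
    destruct (ER_plus_Fin_inv _ _ _ (J2_neq_MInf _) (J2_neq_MInf _) (T3 i ltac:(lia)))
      as [a [b [Ha [Hb _]]]].
    assert (A : J2 (slope u n i) = Fin a) by exact Ha.
    assert (B : J2 (slope u n (i + 1)) = Fin b) by exact Hb.
    unfold f2. rewrite A, B. split; reflexivity. }
  split; [exact HAn|]. split; [exact HBC|]. split; [|split; [|split]].
  - intros i Hi. apply T1. lia.
  - intros i Hi. destruct (Nat.lt_ge_cases i (k2 - 1)) as [Hlt|Hge].
    + apply (Hpair i). lia.
    + replace i with ((k2 - 2) + 1)%nat by lia. apply (Hpair (k2 - 2)%nat). lia.
  - intros i [Hi|Hi]; [apply T2|apply T4]; lia.
  - replace (rsum (fun j => fval (ER_plus (J2 _) (J2 _))) k1 (k2 - 1 - k1))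
      with (2 * rsum (fun i => (f2 i + f2 (i + 1)%nat) / 2) k1 (k2 - 1 - k1)).
    2:{ rewrite <- rsum_scal. apply rsum_ext. intros i Hi.
        destruct (Hpair i ltac:(lia)) as [A B]. unfold slope in A, B. rewrite A, B. simpl. field. }
    unfold f1, g, slope. field.
Qed.

Variable m : R.
Hypothesis J0_ge : forall z, ER_le (Fin m) (J0 J1 J2 z).

Lemma J1_add_J2_ge z a b : J1 z = Fin a -> J2 z = Fin b -> m <= a + b.
Proof.
  intros Ha Hb.
  pose proof (ER_le_trans _ _ _ (J0_ge z) (J0_le_split z z z b a a ltac:(lra) Hb Ha Ha)).
  simpl in *. lra.
Qed.

Lemma J2_mid_add_J1_ge x y p q1 q2 :
  J2 ((x + y) / 2) = Fin p -> J1 x = Fin q1 -> J1 y = Fin q2 -> m <= p + (q1 + q2) / 2.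
Proof.
  intros Hp Hq1 Hq2.
  assert (Hxy : x + y = 2 * ((x + y) / 2)) by field.
  pose proof (ER_le_trans _ _ _ (J0_ge _) (J0_le_split _ x y p q1 q2 Hxy Hp Hq1 Hq2)).
  simpl in *. lra.
Qed.

Lemma HnT_neq_MInf n l v0 v1 k1 k2 r t u : HnT J1 J2 n l v0 v1 k1 k2 r t u <> MInf.
Proof.
  unfold HnT, Hn.
  destruct (excluded_middle_informative _); [|discriminate].
  destruct (excluded_middle_informative _); [|discriminate]. cbv zeta.
  pose proof J1_neq_MInf.
  repeat apply ER_plus_neq_MInf; apply ERsum_neq_MInf; intros;
    apply ER_scale_neq_MInf; try apply ER_plus_neq_MInf; auto.
Qed.

Lemma element_excess_bound n l v0 v1 k1 k2 r t hh u E M :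
  (k1 <= t hh)%nat -> (t hh + 2 <= t (hh + 1))%nat -> (t (hh + 1) <= k2)%nat ->
  (k2 < n)%nat -> (hh < r)%nat ->
  HnT J1 J2 n l v0 v1 k1 k2 r t u = Fin E -> E <= m + M * lam n ->
  exists a b, J1 (slope u n (t hh)) = Fin a /\ J2 (slope u n (t hh)) = Fin b /\
    (INR (t (hh + 1)%nat - t hh) - 1) * (a + b - m)
    <= M + m - (fval (J1 v0) + fval (J1 v1)) / 2.
Proof.
  intros Hk1 Hel Hk2 Hkn Hhr HE HEM.
  unfold HnT in HE. destruct (excluded_middle_informative _) as [HAT|]; [|discriminate].
  pose proof (Hn_Fin_inv n l v0 v1 k1 k2 u E ltac:(lia) Hkn HE) as Hinv. cbv zeta in Hinv.
  destruct Hinv as [[Hcont _] [HBC [F1 [F2 [FG ->]]]]].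
  set (f1 := fun i => fval (J1 (slope u n i))) in *.
  set (f2 := fun i => fval (J2 (slope u n i))) in *.
  set (g := fun i => fval (J2 ((node u n (i + 2) - node u n i) / (2 * lam n)))) in *.
  assert (Hn0 : (0 < n)%nat) by lia.
  pose proof (lam_pos n Hn0) as HL. pose proof (lam_mul_n n Hn0) as HLn.
  destruct (BC_slopes n l v0 v1 u Hn0 HBC) as [S0 S1].
  assert (Hsum := qc_sum_ge f1 f2 g m n k1 k2 (t hh) (t (hh + 1)%nat)
                    Hk1 ltac:(lia) Hk2 Hkn).
  lapply Hsum; [clear Hsum; intros Hsum|].
  2:{ intros i Hi. pose proof (FG i Hi) as Hg. unfold f1, g in *.
      rewrite second_difference_slope in Hg |- * by lia.
      pose proof (J2_mid_add_J1_ge _ _ _ _ _ Hg (F1 i ltac:(lia)) (F1 (i + 1)%nat ltac:(lia))).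
      lra. }
  lapply Hsum; [clear Hsum; intros Hsum|].
  2:{ intros i Hi. exact (J1_add_J2_ge _ _ _ (F1 i ltac:(lia)) (F2 i Hi)). }
  lapply Hsum; [clear Hsum; intros Hsum|].
  2:{ intros i Hi. unfold f1, f2.
      rewrite (slope_const_on_element n r t u hh Hn0 Hcont HAT Hhr ltac:(lia) ltac:(lia) i Hi).
      split; reflexivity. }
  exists (f1 (t hh)), (f2 (t hh)).
  split; [apply F1; lia|]. split; [apply F2; lia|].
  replace (fval (J1 v0) + fval (J1 v1)) with (f1 0%nat + f1 (n - 1)%nat)
    by (unfold f1; rewrite S0, S1; reflexivity).
  set (X := (INR (t (hh + 1)%nat - t hh) - 1) * (f1 (t hh) + f2 (t hh) - m)) in *.
  set (B := (f1 0%nat + f1 (n - 1)%nat) / 2) in *.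
  assert (Hprod : lam n * (B + (INR n - 1) * m + X) = lam n * (B - m + X - M) + m + M * lam n).
  { transitivity (lam n * (B - m + X - M) + m * (lam n * INR n) + M * lam n); [ring|].
    rewrite HLn. ring. }
  apply Rmult_le_compat_l with (r := lam n) in Hsum; [|lra].
  unfold f2 in Hsum. cbv beta in Hsum.
  assert (B - m + X - M <= 0) by (apply Rmult_le_reg_l with (lam n); lra).
  lra.
Qed.

Lemma Un_cv_of_excess_bound (p : nat -> R) (w : nat -> nat) gam C N0 :
  (forall eps, eps > 0 -> exists eta, eta > 0 /\
     forall z, Rabs (z - gam) >= eps -> ER_le (Fin (m + eta)) (J0 J1 J2 z)) ->
  (forall K, exists N, forall n, (N <= n)%nat -> (K <= w n)%nat) ->
  (forall n, (N0 <= n)%nat -> (2 <= w n)%nat -> exists a b,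
     J1 (p n) = Fin a /\ J2 (p n) = Fin b /\ (INR (w n) - 1) * (a + b - m) <= C) ->
  Un_cv p gam.
Proof.
  intros Hgap Hw Hbound eps Heps.
  destruct (Hgap eps Heps) as [eta [Heta Hgap_eps]].
  destruct (INR_unbounded (Rabs C / eta + 2)) as [K HK].
  destruct (Hw K) as [N HN].
  exists (Nat.max N0 N). intros n Hn. unfold R_dist.
  assert (HC : 0 <= Rabs C / eta)
    by (apply Rmult_le_pos; [apply Rabs_pos|left; apply Rinv_0_lt_compat; lra]).
  assert (HwK : INR K <= INR (w n)) by (apply le_INR, HN; lia).
  assert (Hw2 : (2 <= w n)%nat) by (apply INR_le; rewrite (INR_IZR_INZ 2); simpl; lra).
  destruct (Hbound n ltac:(lia) Hw2) as [a [b [Ha [Hb Hexcess]]]].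
  apply Rnot_le_lt. intros Hfar.
  pose proof (ER_le_trans _ _ _ (Hgap_eps _ (Rle_ge _ _ Hfar))
                (J0_le_split (p n) (p n) (p n) b a a ltac:(lra) Hb Ha Ha)) as Hab.
  simpl in Hab.
  assert ((Rabs C / eta + 1) * eta <= (INR (w n) - 1) * (a + b - m))
    by (apply Rmult_le_compat; lra).
  assert (Rabs C / eta * eta = Rabs C) by (field; lra).
  pose proof (Rle_abs C). lra.
Qed.

End Potentials.

Theorem lemma4p7
  (J1 J2 Psi : R -> ER) (alpha c1 c2 delta1 delta2 gamma J0inf : R)
  (l v0 v1 : R) (k1 k2 r : nat -> nat) (t : nat -> nat -> nat) (h : nat -> nat)
  (u : nat -> R -> R) (N0 : nat)
  (HJ1 : forall z, J1 z <> MInf) (HJ2 : forall z, J2 z <> MInf)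
  (* [LJ1] *)
  (LJ1 : ~ exists z, J0 J1 J2 z = conv_lsc_env (J0 J1 J2) z /\
           exists d p q, d > 0 /\ forall y, Rabs (y - z) < d -> J0 J1 J2 y = Fin (p * y + q))
  (* [LJ2] (for z in the domain of J0) *)
  (LJ2 : forall z, J0 J1 J2 z = conv_lsc_env (J0 J1 J2) z -> dom (J0 J1 J2) z ->
           exists! p : R * R, fst p + snd p = 2 * z /\
             J0 J1 J2 z = ER_plus (J2 z) (ER_scale (1/2) (ER_plus (J1 (fst p)) (J1 (snd p)))))
  (* [LJ3] *)
  (Halpha : 0 < alpha <= 1)
  (LJ3a : C1alpha_on (dom J1) J1 alpha) (LJ3b : C1alpha_on (dom J2) J2 alpha)
  (LJ3c : C1_on (dom (J0 J1 J2)) (J0 J1 J2))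
  (LJ3d : forall z, dom J1 z <-> dom J2 z)
  (LJ3e : forall z, z > 0 -> dom J1 z)
  (LJ3f : ER_lim_pinf J1 0) (LJ3g : ER_lim_pinf J2 0)
  (LJ3h : ER_lim_pinf (J0 J1 J2) J0inf)
  (* [LJ4] *)
  (HPsi0 : forall z, ER_le (Fin 0) (Psi z)) (HPsic : ER_convex Psi)
  (HPsilim : forall M, exists K, forall z, z < K -> ER_le (Fin (M * Rabs z)) (Psi z))
  (Hc1 : c1 > 0) (Hc2 : c2 > 0)
  (HPsiJ1 : forall z, ER_le (ER_scale c1 (ER_plus (Psi z) (Fin (-1)))) (J1 z) /\
                      ER_le (J1 z) (ER_scale c2 (ER_max (Psi z) (Fin (Rabs z)))))
  (HPsiJ2 : forall z, ER_le (ER_scale c1 (ER_plus (Psi z) (Fin (-1)))) (J2 z) /\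
                      ER_le (J2 z) (ER_scale c2 (ER_max (Psi z) (Fin (Rabs z)))))
  (Hd1 : delta1 > 0) (Hd2 : delta2 > 0) (Hg : gamma > 0)
  (Hd1min : forall z, ER_le (J1 delta1) (J1 z))
  (Hd1uniq : forall z, (forall w, ER_le (J1 z) (J1 w)) -> z = delta1)
  (Hd2min : forall z, ER_le (J2 delta2) (J2 z))
  (Hd2uniq : forall z, (forall w, ER_le (J2 z) (J2 w)) -> z = delta2)
  (Hgmin : forall z, ER_le (J0 J1 J2 gamma) (J0 J1 J2 z))
  (Hguniq : forall z, (forall w, ER_le (J0 J1 J2 z) (J0 J1 J2 w)) -> z = gamma)
  (HJ1sc : strictly_convex_on (fun z => z < delta1 /\ dom J1 z) J1)
  (HJ2sc : strictly_convex_on (fun z => z < delta2 /\ dom J2 z) J2)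
  (HJ0inf : ER_lt (J0 J1 J2 gamma) (Fin J0inf))
  (HJ0env : forall z, z <= gamma -> J0 J1 J2 z = conv_lsc_env (J0 J1 J2) z)
  (Hl : l > gamma) (Hv0 : v0 > 0) (Hv1 : v1 > 0)
  (Hk : forall n, (N0 <= n)%nat -> (0 < k1 n)%nat /\ (k1 n < k2 n)%nat /\ (k2 n + 2 < n)%nat)
  (* assumption (K) *)
  (K1 : forall M : nat, exists N, forall n, (N <= n)%nat -> (M <= k1 n)%nat)
  (K2 : forall M : nat, exists N, forall n, (N <= n)%nat -> (M <= n - k2 n)%nat)
  (K3 : Un_cv (fun n => lam n * INR (k1 n)) 0)
  (K4 : Un_cv (fun n => lam n * INR (n - k2 n)) 0)
  (Ht0 : forall n, (N0 <= n)%nat -> t n 0%nat = 0%nat)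
  (Htr : forall n, (N0 <= n)%nat -> t n (r n) = n)
  (Htinc : forall n i, (N0 <= n)%nat -> (i < r n)%nat -> (t n i < t n (i + 1))%nat)
  (Hbound : exists M : R, forall n, (N0 <= n)%nat ->
      ER_le (H1nT J1 J2 n l v0 v1 (k1 n) (k2 n) (r n) (t n) (u n)) (Fin M))
  (Hh : forall n, (N0 <= n)%nat ->
      (h n < r n)%nat /\ (k1 n <= t n (h n))%nat /\ (t n (h n + 1) <= k2 n)%nat)
  (Hliminf : forall M : nat, exists N, forall n, (N <= n)%nat ->
      (M <= t n (h n + 1) - t n (h n))%nat) :
  Un_cv (fun n => (node (u n) n (t n (h n) + 1) - node (u n) n (t n (h n))) / lam n) gamma.
Proof.
  assert (Hdom : forall z, z > 0 -> J1 z <> PInf /\ J2 z <> PInf)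
    by (intros z Hz; split; [|apply LJ3d]; apply LJ3e; exact Hz).
  destruct (J1 delta1) as [j1min| |] eqn:Ed1; [|exfalso|destruct (HJ1 delta1); exact Ed1].
  2:{ pose proof (Hd1min 1) as H.
      destruct (J1 1) eqn:E1; simpl in H; try tauto. apply (proj1 (Hdom 1 ltac:(lra))); exact E1. }
  assert (J1_ge : forall z, ER_le (Fin j1min) (J1 z)) by exact Hd1min.
  set (m := fval (J0 J1 J2 gamma)).
  assert (J0_Fin_pos : forall z, z > 0 -> J0 J1 J2 z = Fin (fval (J0 J1 J2 z)))
    by (intros z Hz; apply (J0_Fin J1 J2 j1min J1_ge HJ2); apply Hdom, Hz).
  assert (Egam : J0 J1 J2 gamma = Fin m) by (apply J0_Fin_pos, Hg).
  assert (J0_ge : forall z, ER_le (Fin m) (J0 J1 J2 z)) by (intros z; rewrite <- Egam; apply Hgmin).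
  assert (Hm_inf : m < J0inf).
  { rewrite Egam in HJ0inf. destruct HJ0inf as [Hle Hneq]. simpl in Hle.
    destruct (Req_dec m J0inf); [subst; congruence|lra]. }
  assert (Hgap := ER_isolated_argmin (J0 J1 J2) gamma m Egam J0_ge Hguniq J0inf
                    (J0_neq_MInf J1 J2 j1min J1_ge HJ2) HJ0env
                    (fun z Hz => J0_Fin_pos z ltac:(lra)) Hm_inf LJ3h LJ3c).
  assert (Henv := conv_lsc_env_le_right (J0 J1 J2) gamma m l J0inf Egam Hl LJ3h).
  destruct Hbound as [M HM].
  eapply (Un_cv_of_excess_bound J1 J2 j1min J1_ge m _ _ gamma _ N0 Hgap Hliminf).
  intros n Hn Hw. destruct (Hk n Hn) as (_ & _ & Hkn). destruct (Hh n Hn) as (Hhr & Hk1 & Hk2).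
  destruct (ER_scaled_excess_le _ _ _ M m (lam_pos n ltac:(lia))
              (HnT_neq_MInf J1 J2 j1min J1_ge HJ2 n l v0 v1 (k1 n) (k2 n) (r n) (t n) (u n))
              Henv (HM n Hn)) as [E [HE HEM]].
  exact (element_excess_bound J1 J2 j1min J1_ge HJ2 m J0_ge n l v0 v1 (k1 n) (k2 n) (r n) (t n)
           (h n) (u n) E M Hk1 ltac:(lia) Hk2 ltac:(lia) Hhr HE HEM).
Qed.
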